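(* Assume that each $f_m^j$ is convex and $L$-smooth and that $f$ is $\mu$-strongly convex ($\mu>0$). In the setting described in the context, for every meta-epoch $t$ and every $\theta>0$, $$-2\theta\Big\langle\frac1R\sum_{r=0}^{R-1}\frac1C\sum_{m\in S_t^{\lambda_r}}\frac1N\sum_{j=0}^{N-1}\nabla f_m^{\pi_m^j}(x^{r,j}_{m,t}),\,x_t-x_\star\Big\rangle\le-\frac{\theta\mu}{2}\|x_t-x_\star\|^2-\theta\big(f(x_t)-f(x_\star)\big)+\theta LV_t,$$ where $V_t=\frac{1}{RCN}\sum_{r=0}^{R-1}\sum_{m\in S_t^{\lambda_r}}\sum_{j=0}^{N-1}\|x_t-x^{r,j}_{m,t}\|^2$.
   Context: Setting. There are $M$ clients, each holding $N$ data points. For $m\in[M]$ and $j\in\{0,\dots,N-1\}$, $f_m^j:\mathbb{R}^d\to\mathbb{R}$ is differentiable. Define $f_m=\frac1N\sum_j f_m^j$ and $f=\frac1M\sum_m f_m$, and let $x_\star$ be the minimizer of $f$. $L$-smooth means the gradient is $L$-Lipschitz. $\mu$-strong convexity means $\langle\nabla h(x),y-x\rangle\le-(h(x)-h(y)+\frac\mu2\|x-y\|^2)$ for all $x,y$. Algorithm RR-CLI. Let $C$ be a cohort size with $M=CR$, and let $\gamma,\eta>0$. In meta-epoch $t$: - The clients are partitioned into $R$ disjoint cohorts of size $C$, taken in order $S_t^{\lambda_0},\dots,S_t^{\lambda_{R-1}}$. - Each client $m$ has a permutation $\pi_m=(\pi_m^0,\dots,\pi_m^{N-1})$ of its data indices.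 - Set $x_t^0=x_t$. For $r=0,\dots,R-1$ and $m\in S_t^{\lambda_r}$, set $x^{r,0}_{m,t}=x^r_t$ and $x^{r,j+1}_{m,t}=x^{r,j}_{m,t}-\gamma\nabla f_m^{\pi_m^j}(x^{r,j}_{m,t})$ for $j=0,\dots,N-1$. - The server sets $x^{r+1}_t=x^r_t-\eta\frac1C\sum_{m\in S_t^{\lambda_r}}\frac{x^r_t-x^{r,N}_{m,t}}{\gamma N}$. *)

From mathcomp Require Import all_boot all_algebra all_fingroup.
From mathcomp Require Import all_classical all_reals all_analysis.
Set Implicit Arguments. Unset Strict Implicit. Unset Printing Implicit Defensive.
Import GRing.Theory Num.Theory.
Local Open Scope ring_scope.

Section Defs.
Variables (K : realType) (d : nat).
Notation vec := 'rV[K]_d.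

Definition dotv (u v : vec) : K := \sum_(i < d) u 0 i * v 0 i.
Definition sqnorm (u : vec) : K := dotv u u.
Definition norm2 (u : vec) : K := Num.sqrt (sqnorm u).

Definition grad (h : vec -> K) (x : vec) : vec :=
  \row_i derive h x (delta_mx 0 i).

Definition L_smooth (L : K) (h : vec -> K) : Prop :=
  forall x y, norm2 (grad h x - grad h y) <= L * norm2 (x - y).

Definition convex_fun (h : vec -> K) : Prop :=
  forall (x y : vec) (a : K), 0 <= a -> a <= 1 ->
    h (a *: x + (1 - a) *: y) <= a * h x + (1 - a) * h y.

Definition strongly_convex (mu : K) (h : vec -> K) : Prop :=
  forall x y, dotv (grad h x) (y - x) <= - (h x - h y + mu / 2 * sqnorm (x - y)).

Variables (M N : nat).

Definition fclient (fs : 'I_M -> 'I_N -> vec -> K) (m : 'I_M) (x : vec) : K :=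
  (N%:R)^-1 * \sum_(j < N) fs m j x.
Definition fglob (fs : 'I_M -> 'I_N -> vec -> K) (x : vec) : K :=
  (M%:R)^-1 * \sum_(m < M) fclient fs m x.

(* local iterate x^{r,j}_{m}: j local RR steps from x0 along permutation pi *)
Definition loc_iter (gamma : K) (fs : 'I_M -> 'I_N -> vec -> K)
    (pi : {perm 'I_N}) (m : 'I_M) (x0 : vec) (j : nat) : vec :=
  foldl (fun x i => x - gamma *: grad (fs m (pi i)) x) x0 (take j (enum 'I_N)).

Variable C : nat.

(* server iterates x^r_t within one meta-epoch, with cohort S^{lambda_r} listed
   as (coh r c)_{c < C} and permutations pis m *)
Fixpoint server_iter (gamma eta : K) (fs : 'I_M -> 'I_N -> vec -> K)
    (coh : nat -> 'I_C -> 'I_M) (pis : 'I_M -> {perm 'I_N}) (x0 : vec) (r : nat)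
    : vec :=
  match r with
  | 0 => x0
  | r'.+1 =>
      let xr := server_iter gamma eta fs coh pis x0 r' in
      xr - eta *: ((C%:R)^-1 *: \sum_(c < C)
        ((gamma * N%:R)^-1 *: (xr - loc_iter gamma fs (pis (coh r' c)) (coh r' c) xr N)))
  end.

Variable R : nat.

Fixpoint meta_iter (gamma eta : K) (fs : 'I_M -> 'I_N -> vec -> K)
    (coh : nat -> nat -> 'I_C -> 'I_M) (pis : nat -> 'I_M -> {perm 'I_N})
    (x0 : vec) (t : nat) : vec :=
  match t with
  | 0 => x0
  | t'.+1 => server_iter gamma eta fs (coh t') (pis t')
               (meta_iter gamma eta fs coh pis x0 t') R
  end.

End Defs.

From mathcomp Require Import all_boot all_algebra all_fingroup.
From mathcomp Require Import all_classical all_reals all_analysis.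
From mathcomp Require Import ring lra.
Set Implicit Arguments. Unset Strict Implicit. Unset Printing Implicit Defensive.
Import order.Order.TTheory GRing.Theory Num.Theory numFieldNormedType.Exports.
Local Open Scope classical_set_scope.
Local Open Scope ring_scope.

(* For one sample h = f_m^(pi_m j) with local iterate y, convexity of h at y
   and the descent lemma (L-smoothness) give
     -<grad h(y), x - x_star> <= h(x_star) - h(x) + L/2 |x - y|^2.
   The cohorts partition the clients and each pi_m is a permutation. Half of the resulting 2 theta (f(x_star) - f(x_t)) is
   then bounded by -theta mu/2 |x_t - x_star|^2, by strong convexity at the
   minimiser x_star, where <grad f(x_star), x_t - x_star> >= 0. *)

Section InnerProduct.
Variables (K : realType) (d : nat).
Implicit Types (u v w : 'rV[K]_d).

Lemma dotvC u v : dotv u v = dotv v u.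
Proof. by apply: eq_bigr => i _; rewrite mulrC. Qed.

Lemma dotv0l w : dotv 0 w = 0.
Proof. by rewrite /dotv big1 // => i _; rewrite mxE mul0r. Qed.

Lemma dotvDl u v w : dotv (u + v) w = dotv u w + dotv v w.
Proof.
by rewrite /dotv -big_split; apply: eq_bigr => i _; rewrite !mxE mulrDl.
Qed.

Lemma dotvZl (a : K) u w : dotv (a *: u) w = a * dotv u w.
Proof. by rewrite /dotv mulr_sumr; apply: eq_bigr => i _; rewrite !mxE mulrA. Qed.

Lemma dotvZr (a : K) u w : dotv w (a *: u) = a * dotv w u.
Proof. by rewrite dotvC dotvZl dotvC. Qed.

Lemma dotvBl u v w : dotv (u - v) w = dotv u w - dotv v w.
Proof. by rewrite dotvDl -scaleN1r dotvZl mulN1r. Qed.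

Lemma dotvBr u v w : dotv w (u - v) = dotv w u - dotv w v.
Proof. by rewrite dotvC dotvBl !(dotvC w). Qed.

Lemma dotv_suml (I : Type) (r : seq I) (P : pred I) (F : I -> 'rV[K]_d) w :
  dotv (\sum_(i <- r | P i) F i) w = \sum_(i <- r | P i) dotv (F i) w.
Proof.
exact: (big_morph (fun u => dotv u w) (fun u v => dotvDl u v w) (dotv0l w)).
Qed.

Lemma sqnorm_ge0 u : 0 <= sqnorm u.
Proof. by apply: sumr_ge0 => i _; rewrite -expr2 sqr_ge0. Qed.

Lemma norm2_ge0 u : 0 <= norm2 u.
Proof. exact: sqrtr_ge0. Qed.

Lemma sqr_norm2 u : norm2 u ^+ 2 = sqnorm u.
Proof. by rewrite sqr_sqrtr // sqnorm_ge0. Qed.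

Lemma sqnormBC u v : sqnorm (u - v) = sqnorm (v - u).
Proof. by rewrite -opprB /sqnorm -scaleN1r dotvZl dotvZr !mulN1r opprK. Qed.

Lemma norm2Z (a : K) u : norm2 (a *: u) = `|a| * norm2 u.
Proof.
by rewrite /norm2 /sqnorm dotvZl dotvZr mulrA -expr2 sqrtrM ?sqr_ge0 // sqrtr_sqr.
Qed.

(* Lagrange's identity: [2 (sqnorm u sqnorm v - dotv u v ^+ 2)] is the sum of
   the squares [(u_i v_j - u_j v_i) ^+ 2]. *)
Lemma dotv_sqr_le u v : dotv u v ^+ 2 <= sqnorm u * sqnorm v.
Proof.
have sum_mul (F G : 'I_d -> K) :
    \sum_i \sum_j F i * G j = (\sum_i F i) * (\sum_j G j).
  by rewrite mulr_suml; apply: eq_bigr => i _; rewrite mulr_sumr.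
have sum_mulC (F G : 'I_d -> K) :
    \sum_i \sum_j F j * G i = (\sum_i F i) * (\sum_j G j).
  by rewrite exchange_big sum_mul.
have : 0 <= \sum_(i < d) \sum_(j < d) (u 0 i * v 0 j - u 0 j * v 0 i) ^+ 2.
  by do 2!(apply: sumr_ge0 => ? _); exact: sqr_ge0.
have -> : \sum_(i < d) \sum_(j < d) (u 0 i * v 0 j - u 0 j * v 0 i) ^+ 2 =
    \sum_i \sum_j (u 0 i * u 0 i) * (v 0 j * v 0 j)
  + \sum_i \sum_j (u 0 j * u 0 j) * (v 0 i * v 0 i)
  - 2 * \sum_i \sum_j (u 0 i * v 0 i) * (u 0 j * v 0 j).
  rewrite mulr_sumr -big_split -sumrB /=; apply: eq_bigr => i _.
  rewrite mulr_sumr -big_split -sumrB /=; apply: eq_bigr => j _; ring.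
rewrite sum_mul sum_mulC sum_mul -expr2 /sqnorm /dotv; lra.
Qed.

Lemma dotv_le_norm2 u v : dotv u v <= norm2 u * norm2 v.
Proof.
apply: le_trans (ler_norm _) _.
rewrite -sqrtr_sqr /norm2 -sqrtrM ?sqnorm_ge0 //.
exact/ler_wsqrtr/dotv_sqr_le.
Qed.

End InnerProduct.

Section Gradient.
Variables (K : realType) (d : nat).
Notation vec := 'rV[K]_d.

Lemma derive_gradE (h : vec -> K) x v : differentiable h x ->
  derive h x v = dotv (grad h x) v.
Proof.
move=> dh; rewrite deriveE // {1}(matrix_sum_delta v) big_ord1 linear_sum.
by apply: eq_bigr => i _; rewrite linearZ /= -deriveE // mxE mulrC.
Qed.

Lemma grad_quotient_cvg (h : vec -> K) x v : differentiable h x ->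
  s^-1 * (h (s *: v + x) - h x) @[s --> (0 : K)^'+] --> dotv (grad h x) v.
Proof.
move=> dh; rewrite -derive_gradE //; apply: cvg_dnbhs_at_right.
exact: diff_derivable.
Qed.

Lemma convex_grad_le (h : vec -> K) x y : convex_fun h -> differentiable h y ->
  dotv (grad h y) (x - y) <= h x - h y.
Proof.
move=> hc dh; apply: (cvgr_to_le (grad_quotient_cvg (v := x - y) dh)).
near=> s.
have s_gt0 : 0 < s by near: s; exact: nbhs_right_gt.
have s_lt1 : s < 1 by near: s; exact: nbhs_right_lt.
have -> : s *: (x - y) + y = s *: x + (1 - s) *: y.
  by rewrite scalerBr scalerBl scale1r addrA addrAC.
rewrite ler_pdivrMl //; have := hc x y s (ltW s_gt0) (ltW s_lt1); lra.
Unshelve. all: by end_near.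
Qed.

Lemma minimizer_grad_ge0 (h : vec -> K) x v : differentiable h x ->
  (forall z, h x <= h z) -> 0 <= dotv (grad h x) v.
Proof.
move=> dh hmin; apply: (cvgr_to_ge (grad_quotient_cvg (v := v) dh)).
near=> s.
have s_gt0 : 0 < s by near: s; exact: nbhs_right_gt.
by apply: mulr_ge0; [rewrite invr_ge0 ltW | rewrite subr_ge0].
Unshelve. all: by end_near.
Qed.

Lemma is_derive_line (h : vec -> K) x v s : differentiable h (s *: v + x) ->
  is_derive s 1 (fun t => h (t *: v + x)) (dotv (grad h (s *: v + x)) v).
Proof.
move=> dh.
have quotientE :
    (fun t : K => t^-1 *: (h ((t *: 1 + s) *: v + x) - h (s *: v + x))) =
    (fun t => t^-1 *: (h (t *: v + (s *: v + x)) - h (s *: v + x))).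
  by apply/funext => t; rewrite [t *: 1]mulr1 scalerDl addrA.
apply: DeriveDef; first by rewrite /derivable /= quotientE; exact: diff_derivable.
by rewrite -derive_gradE // /derive /= quotientE.
Qed.

Lemma smooth_grad_incr_le (h : vec -> K) L x v s : L_smooth L h -> 0 <= s ->
  dotv (grad h (s *: v + x) - grad h x) v <= s * L * sqnorm v.
Proof.
move=> hs s_ge0; apply: le_trans (dotv_le_norm2 _ _) _.
have := hs (s *: v + x) x; rewrite addrK norm2Z ger0_norm // => lip.
have := ler_wpM2r (norm2_ge0 v) lip; rewrite -sqr_norm2; lra.
Qed.

(* Mean value theorem for [phi s = h (y + s (x - y)) - s A - s^2 B], whose
   derivative is nonpositive on [0, 1] by smoothness. *)
Lemma smooth_descent (h : vec -> K) L x y :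
  (forall z, differentiable h z) -> L_smooth L h ->
  h x <= h y + dotv (grad h y) (x - y) + L / 2 * sqnorm (x - y).
Proof.
move=> dh hs; set v := x - y.
set A := dotv (grad h y) v; set B := L / 2 * sqnorm v.
pose phi s := h (s *: v + y) - (s * A + s ^+ 2 * B).
have dphi (s : K) :
    is_derive s 1 phi (dotv (grad h (s *: v + y)) v - (A + 2 * s * B)).
  apply: is_deriveB; first exact: is_derive_line.
  have -> : (fun t => t * A + t ^+ 2 * B) = id * cst A + id ^+ 2 * cst B.
    by apply/funext.
  apply: is_derive_eq; rewrite /= !scaler0 !add0r /cst.
  by change (A * 1 + B * (2 * s ^+ 1 * 1) = A + 2 * s * B); ring.
have [c c01 phiE] := MVT ltr01 (fun s _ => dphi s)
  (derivable_within_continuous (fun s _ => @ex_derive _ _ _ _ _ _ _ (dphi s))).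
have c_ge0 : 0 <= c by move: c01; rewrite in_itv /= => /andP[/ltW].
have := smooth_grad_incr_le y v hs c_ge0; rewrite dotvBl -/A.
move: phiE; rewrite /phi scale1r scale0r add0r /v subrK /B; lra.
Qed.

Lemma convex_smooth_grad_bound (h : vec -> K) L xs x y :
  (forall z, differentiable h z) -> convex_fun h -> L_smooth L h ->
  - dotv (grad h y) (x - xs) <= h xs - h x + L / 2 * sqnorm (x - y).
Proof.
move=> dh hc hs.
have := convex_grad_le xs hc (dh y); have := smooth_descent x y dh hs.
have -> : x - xs = (x - y) - (xs - y) by rewrite opprB addrA subrK.
rewrite (dotvBr (x - y)); lra.
Qed.

Lemma strongly_convex_min_gap (h : vec -> K) mu xs x :
  differentiable h xs -> strongly_convex mu h -> (forall z, h xs <= h z) ->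
  h xs - h x <= - (mu / 2 * sqnorm (x - xs)).
Proof.
move=> dh hsc hmin; have := hsc xs x.
have := minimizer_grad_ge0 (x - xs) dh hmin; rewrite sqnormBC; lra.
Qed.

Lemma sum_convex_smooth_grad_bound (I : finType) (h : I -> vec -> K)
    (y : I -> vec) L xs x :
  (forall i z, differentiable (h i) z) -> (forall i, convex_fun (h i)) ->
  (forall i, L_smooth L (h i)) ->
  - \sum_i dotv (grad (h i) (y i)) (x - xs) <=
  \sum_i h i xs - \sum_i h i x + L / 2 * \sum_i sqnorm (x - y i).
Proof.
move=> dh hc hs; rewrite -sumrN -sumrB mulr_sumr -big_split.
by apply: ler_sum => i _; apply: convex_smooth_grad_bound.
Qed.

End Gradient.

Lemma sum_cohorts (V : nmodType) M C R (F : 'I_M -> V)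
    (g : 'I_R -> 'I_C -> 'I_M) :
  M = (C * R)%N -> injective (fun p : 'I_R * 'I_C => g p.1 p.2) ->
  \sum_(r < R) \sum_(c < C) F (g r c) = \sum_(m < M) F m.
Proof.
move=> MCR ginj; rewrite pair_big /=.
have gbij : bijective (fun p : 'I_R * 'I_C => g p.1 p.2).
  by apply: inj_card_bij ginj _; rewrite card_prod !card_ord MCR mulnC.
by rewrite [RHS](reindex _ (onW_bij _ gbij)).
Qed.

Lemma sum3E (V : nmodType) R C N (F : 'I_R -> 'I_C -> 'I_N -> V) :
  \sum_(r < R) \sum_(c < C) \sum_(j < N) F r c j =
  \sum_(p : 'I_R * 'I_C * 'I_N) F p.1.1 p.1.2 p.2.
Proof. by rewrite !pair_big. Qed.

Lemma mean3E (K : fieldType) (V : lmodType K) R C N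
    (F : 'I_R -> 'I_C -> 'I_N -> V) :
  (R%:R)^-1 *: \sum_(r < R) ((C%:R)^-1 *: \sum_(c < C)
     ((N%:R)^-1 *: \sum_(j < N) F r c j))
  = ((R * C * N)%:R)^-1 *: \sum_(r < R) \sum_(c < C) \sum_(j < N) F r c j.
Proof.
under eq_bigr do rewrite -scaler_sumr scalerA.
by rewrite -scaler_sumr scalerA !natrM !invfM mulrA.
Qed.

Section FederatedAverages.
Variables (K : realType) (d M N C R : nat).
Variable fs : 'I_M -> 'I_N -> 'rV[K]_d -> K.

Lemma fglob_differentiable x : (forall m j z, differentiable (fs m j) z) ->
  differentiable (fglob fs) x.
Proof.
move=> dfs.
have -> : fglob fs =
    cst (M%:R^-1) * \sum_(m < M) (cst (N%:R^-1) * \sum_(j < N) fs m j).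
  apply/funext => z; rewrite /fglob /fclient /= fct_sumE; congr (_ * _).
  by apply: eq_bigr => m _ /=; rewrite fct_sumE.
apply: differentiableM => //; apply: differentiable_sum => m.
by apply: differentiableM => //; apply: differentiable_sum.
Qed.

Lemma fglob_cohortsE (g : 'I_R -> 'I_C -> 'I_M) (pi : 'I_M -> {perm 'I_N}) z :
  M = (C * R)%N -> injective (fun p : 'I_R * 'I_C => g p.1 p.2) ->
  fglob fs z = ((R * C * N)%:R)^-1 *
    \sum_(r < R) \sum_(c < C) \sum_(j < N) fs (g r c) (pi (g r c) j) z.
Proof.
move=> MCR ginj.
rewrite (sum_cohorts (fun m => \sum_(j < N) fs m (pi m j) z) MCR ginj).
rewrite /fglob /fclient; under eq_bigr => m _ do rewrite (reindex_perm (pi m)).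
rewrite -mulr_sumr mulrA -invfM; congr (_^-1 * _).
by rewrite MCR -natrM (mulnC C R).
Qed.

End FederatedAverages.

Lemma cohort_grad_inner_bound (K : realType) (d M N C R : nat)
  (fs : 'I_M -> 'I_N -> 'rV[K]_d -> K) (L mu theta : K)
  (coh : 'I_R -> 'I_C -> 'I_M) (pis : 'I_M -> {perm 'I_N})
  (xstar xt : 'rV[K]_d) (X : 'I_R -> 'I_C -> 'I_N -> 'rV[K]_d) :
  M = (C * R)%N -> injective (fun p : 'I_R * 'I_C => coh p.1 p.2) ->
  (forall m j x, differentiable (fs m j) x) ->
  (forall m j, convex_fun (fs m j)) ->
  (forall m j, L_smooth L (fs m j)) ->
  strongly_convex mu (fglob fs) ->
  (forall x, fglob fs xstar <= fglob fs x) ->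
  0 < theta ->
  - (2 * theta) * dotv
      ((R%:R)^-1 *: \sum_(r < R) ((C%:R)^-1 *: \sum_(c < C) ((N%:R)^-1 *:
          \sum_(j < N) grad (fs (coh r c) (pis (coh r c) j)) (X r c j))))
      (xt - xstar)
  <= - (theta * mu / 2) * sqnorm (xt - xstar)
     - theta * (fglob fs xt - fglob fs xstar) + theta * L *
     (((R * C * N)%:R)^-1 * \sum_(r < R) \sum_(c < C) \sum_(j < N)
         sqnorm (xt - X r c j)).
Proof.
move=> MCR cohI dfs cvx smooth sconvex xstar_min theta_gt0.
have gap := strongly_convex_min_gap xt (fglob_differentiable xstar dfs)
  sconvex xstar_min.
have /= bound := @sum_convex_smooth_grad_bound K d _
  (fun p : 'I_R * 'I_C * 'I_N => fs (coh p.1.1 p.1.2) (pis (coh p.1.1 p.1.2) p.2))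
  (fun p => X p.1.1 p.1.2 p.2) L xstar xt
  (fun _ => dfs _ _) (fun _ => cvx _ _) (fun _ => smooth _ _).
move: gap; rewrite mean3E dotvZl sum3E dotv_suml sum3E.
rewrite !(fglob_cohortsE _ pis _ MCR cohI) !sum3E.
set P := ((R * C * N)%:R : K)^-1.
have P_ge0 : 0 <= P by rewrite invr_ge0 ler0n.
have := ler_wpM2l P_ge0 bound; nra.
Qed.

Theorem lemma9 (K : realType) (d M N C R : nat)
  (fs : 'I_M -> 'I_N -> 'rV[K]_d -> K) (L mu gamma eta theta : K)
  (coh : nat -> nat -> 'I_C -> 'I_M) (pis : nat -> 'I_M -> {perm 'I_N})
  (x0 xstar : 'rV[K]_d) (t : nat) :
  (0 < N)%N -> (0 < C)%N -> (0 < R)%N -> M = (C * R)%N ->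
  (forall s, injective (fun p : 'I_R * 'I_C => coh s p.1 p.2)) ->
  (forall m j x, differentiable (fs m j) x) ->
  (forall m j, convex_fun (fs m j)) ->
  (forall m j, L_smooth L (fs m j)) ->
  0 < mu -> strongly_convex mu (fglob fs) ->
  (forall x, fglob fs xstar <= fglob fs x) ->
  0 < gamma -> 0 < eta -> 0 < theta ->
  let xt := meta_iter R gamma eta fs coh pis x0 t in
  let xr (r : nat) := server_iter gamma eta fs (coh t) (pis t) xt r in
  let xloc (r : nat) (m : 'I_M) (j : nat) :=
      loc_iter gamma fs (pis t m) m (xr r) j in
  let Vt := ((R * C * N)%:R)^-1 *
      \sum_(r < R) \sum_(c < C) \sum_(j < N)
         sqnorm (xt - xloc r (coh t r c) j) in
  - (2 * theta) * dotv
      ((R%:R)^-1 *: \sum_(r < R) ((C%:R)^-1 *: \sum_(c < C) ((N%:R)^-1 *: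
          \sum_(j < N) grad (fs (coh t r c) (pis t (coh t r c) j))
                             (xloc r (coh t r c) j))))
      (xt - xstar)
  <= - (theta * mu / 2) * sqnorm (xt - xstar)
     - theta * (fglob fs xt - fglob fs xstar) + theta * L * Vt.
Proof.
move=> _ _ _ MCR cohI dfs cvx smooth _ sconvex xstar_min _ _ theta_gt0 /=.
exact: cohort_grad_inner_bound.
Qed.
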